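(* Let $L$ be an $S$-Noetherian lattice, where $S$ is a multiplicatively closed subset of $L$ with $1\in S$, $0\notin S$. Let $q_1,\dots,q_n\in L$ and let $p$ be an $S$-prime element of $L$ such that $\bigwedge_{i=1}^n q_i\le p$. Then there exist $s\in S$ and an index $k$ such that $sq_k\le p$. In particular, if $p=\bigwedge_{i=1}^n q_i$, then there exist $s\in S$ and $k$ such that $sq_k\le p\le q_k$.
   Context: A multiplicative lattice is a complete lattice with a commutative, associative multiplication distributing over arbitrary joins, with $1$ as identity; $L_*$ is the set of compact elements; $(a:b)=\bigvee\{x\mid xb\le a\}$. An element $m$ is principal if $a\wedge mb=m((a:m)\wedge b)$ and $a\vee(b:m)=(am\vee b):m$ for all $a,b$. An $r$-lattice is a modular, principally generated, compactly generated multiplicative lattice with $1$ compact. A multiplicatively closed subset is a nonempty $S\subseteq L_*$ closed under multiplication. An element $a$ is $S$-compact if $sa\le b\le a$ for some compact $b$ and $s\in S$; an $S$-Noetherian lattice is an $r$-lattice in which every element is $S$-compact. A proper element $p$ with $t\not\le p$ for all $t\in S$ is $S$-prime if there exists $s\in S$ such that for all $a,b\in L$, $ab\le p$ implies $sa\le p$ or $sb\le p$. *)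

From Stdlib Require Import List.

Record MultLattice := {
  car :> Type;
  le : car -> car -> Prop;
  sup : (car -> Prop) -> car;
  mul : car -> car -> car;
  one : car;
  le_refl : forall a, le a a;
  le_trans : forall a b c, le a b -> le b c -> le a c;
  le_antisym : forall a b, le a b -> le b a -> a = b;
  sup_ub : forall (X : car -> Prop) x, X x -> le x (sup X);
  sup_least : forall (X : car -> Prop) u, (forall x, X x -> le x u) -> le (sup X) u;
  one_top : forall a, le a one;
  mul_comm : forall a b, mul a b = mul b a;
  mul_assoc : forall a b c, mul a (mul b c) = mul (mul a b) c;
  mul_one : forall a, mul one a = a;
  mul_sup : forall a (X : car -> Prop),
      mul a (sup X) = sup (fun y => exists x, X x /\ y = mul a x)
}.

Arguments le {L} _ _ : rename.
Arguments sup {L} _ : rename.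
Arguments mul {L} _ _ : rename.
Arguments one {L} : rename.

Section Defs.
Variable L : MultLattice.

Definition zero : L := sup (fun _ => False).
Definition join (a b : L) : L := sup (fun x => x = a \/ x = b).
Definition inf (X : L -> Prop) : L := sup (fun y => forall x, X x -> le y x).
Definition meet (a b : L) : L := inf (fun x => x = a \/ x = b).

Definition colon (a b : L) : L := sup (fun x => le (mul x b) a).

Definition compact (c : L) : Prop :=
  forall X : L -> Prop, le c (sup X) ->
    exists l : list L, (forall x, In x l -> X x) /\ le c (sup (fun x => In x l)).

Definition principal (m : L) : Prop :=
  forall a b : L,
    meet a (mul m b) = mul m (meet (colon a m) b) /\
    join a (colon b m) = colon (join (mul a m) b) m.

Definition modular : Prop :=
  forall a b c : L, le a c -> join a (meet b c) = meet (join a b) c.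

Definition principally_generated : Prop :=
  forall x : L, x = sup (fun m => principal m /\ le m x).

Definition compactly_generated : Prop :=
  forall x : L, x = sup (fun c => compact c /\ le c x).

Definition r_lattice : Prop :=
  modular /\ principally_generated /\ compactly_generated /\ compact one.

Definition mult_closed (S : L -> Prop) : Prop :=
  (exists s, S s) /\ (forall s, S s -> compact s) /\
  (forall s t, S s -> S t -> S (mul s t)).

Definition S_compact (S : L -> Prop) (a : L) : Prop :=
  exists s b, S s /\ compact b /\ le (mul s a) b /\ le b a.

Definition S_Noetherian (S : L -> Prop) : Prop :=
  r_lattice /\ forall a : L, S_compact S a.

Definition proper (p : L) : Prop := p <> one.

Definition S_prime (S : L -> Prop) (p : L) : Prop :=
  proper p /\ (forall t, S t -> ~ le t p) /\
  exists s, S s /\ forall a b : L, le (mul a b) p -> le (mul s a) p \/ le (mul s b) p.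

End Defs.

Arguments zero {L}.
Arguments join {L} _ _.
Arguments inf {L} _.
Arguments meet {L} _ _.
Arguments colon {L} _ _.

(* The product q_0 ... q_(n-1) lies below the meet of the q_i, hence below p.
   Peel the factors off one at a time with the S-prime property of p: each
   failed step only multiplies the accumulated coefficient by the S-prime
   witness, which stays in S.  If no factor ever satisfies s q_k <= p, the
   coefficient itself ends up below p, which an S-prime element forbids. *)
From Stdlib Require Import Lia.

Section MultLatticeFacts.
Variable L : MultLattice.

Lemma mul_le_mono_l (a b c : L) : le b c -> le (mul a b) (mul a c).
Proof.
  intros Hbc.
  assert (Hjoin : sup (fun x => x = b \/ x = c) = c).
  { apply le_antisym.
    - apply sup_least. intros x [-> | ->]; [exact Hbc | apply le_refl].
    - apply sup_ub. now right. }
  rewrite <- Hjoin, mul_sup. apply sup_ub. exists b. auto.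
Qed.

Lemma mul_le_l (a b : L) : le (mul a b) a.
Proof.
  apply le_trans with (mul a one).
  - apply mul_le_mono_l, one_top.
  - rewrite mul_comm, mul_one. apply le_refl.
Qed.

Lemma mul_le_r (a b : L) : le (mul a b) b.
Proof. rewrite mul_comm. apply mul_le_l. Qed.

Lemma inf_le (X : L -> Prop) x : X x -> le (inf X) x.
Proof. intros Hx. apply sup_least. auto. Qed.

Lemma le_inf (X : L -> Prop) y : (forall x, X x -> le y x) -> le y (inf X).
Proof. intros Hy. now apply sup_ub. Qed.

Fixpoint prod_upto (q : nat -> L) (n : nat) : L :=
  match n with
  | 0 => one
  | S m => mul (prod_upto q m) (q m)
  end.

Lemma prod_upto_le (q : nat -> L) n i : i < n -> le (prod_upto q n) (q i).
Proof.
  induction n as [|n IH]; intros Hi; [lia|]. simpl.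
  destruct (PeanoNat.Nat.eq_dec i n) as [-> | Hne].
  - apply mul_le_r.
  - apply le_trans with (prod_upto q n); [apply mul_le_l | apply IH; lia].
Qed.

Lemma prod_upto_le_inf (q : nat -> L) n :
  le (prod_upto q n) (inf (fun x => exists i, i < n /\ x = q i)).
Proof. apply le_inf. intros x [i [Hi ->]]. now apply prod_upto_le. Qed.

Section SPrime.
Variables (S : L -> Prop) (p : L).
Hypotheses (HS : mult_closed L S) (Hp : S_prime L S p).

Lemma S_prime_mul_prod_upto (q : nat -> L) n t :
  S t -> le (mul t (prod_upto q n)) p ->
  exists s k, S s /\ k < n /\ le (mul s (q k)) p.
Proof.
  destruct Hp as [_ [Hnot_le [s [Hs Hprime]]]].
  destruct HS as [_ [_ Hmul]].
  revert t. induction n as [|n IH]; intros t Ht Hle; simpl in Hle.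
  - rewrite mul_comm, mul_one in Hle. now destruct (Hnot_le t Ht).
  - rewrite mul_assoc in Hle.
    destruct (Hprime _ _ Hle) as [Hrest | Hlast].
    + rewrite mul_assoc in Hrest.
      destruct (IH (mul s t) (Hmul _ _ Hs Ht) Hrest) as [s' [k [Hs' [Hk Hle']]]].
      exists s', k. auto.
    + exists s, n. auto.
Qed.

Lemma S_prime_inf_le (q : nat -> L) n :
  S one -> le (inf (fun x => exists i, i < n /\ x = q i)) p ->
  exists s k, S s /\ k < n /\ le (mul s (q k)) p.
Proof.
  intros H1 Hle. apply S_prime_mul_prod_upto with one; [exact H1|].
  rewrite mul_one. exact (le_trans _ _ _ _ (prod_upto_le_inf q n) Hle).
Qed.

End SPrime.
End MultLatticeFacts.

Theorem mainTheorem10 (L : MultLattice) (S : L -> Prop)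
  (HS : mult_closed L S) (H1 : S one) (H0 : ~ S zero)
  (HN : S_Noetherian L S)
  (n : nat) (q : nat -> L) (p : L) (Hp : S_prime L S p) :
  (le (inf (fun x => exists i, i < n /\ x = q i)) p ->
     exists s k, S s /\ k < n /\ le (mul s (q k)) p) /\
  (p = inf (fun x => exists i, i < n /\ x = q i) ->
     exists s k, S s /\ k < n /\ le (mul s (q k)) p /\ le p (q k)).
Proof.
  split; [exact (S_prime_inf_le L S p HS Hp q n H1)|].
  intros Hp_eq.
  destruct (S_prime_inf_le L S p HS Hp q n H1) as [s [k [Hs [Hk Hle]]]].
  { rewrite <- Hp_eq. apply le_refl. }
  exists s, k. repeat split; auto.
  rewrite Hp_eq. apply inf_le. eauto.
Qed.
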